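(* Let $\mathcal{L}^-\subseteq\mathcal{L}$ be languages with $\mathcal{L}\setminus\mathcal{L}^-$ relational. Let $\mathbb{K}$ be an age in $\mathcal{L}$ such that both $\mathbb{K}$ and $\mathbb{K}\restriction\mathcal{L}^-$ are strong Fraïssé classes, let $\kappa$ be an infinite cardinal, and let $M^-$ be an $\mathcal{L}^-$-structure with $M^-\models \mathrm{Fr}_\kappa(\mathbb{K}\restriction\mathcal{L}^-)$. Suppose $\lambda\le \mathrm{cf}(\kappa)$ and $\mathbb{K}$ is closed under less than $\lambda$-unions. Then the partial order $\mathrm{Fn}^{M^-}_{\mathbb{K}}(\kappa)$ is $\lambda$-closed, i.e. for every $\gamma<\lambda$ and every sequence $\langle \mathcal{A}_i : i<\gamma\rangle$ of elements of $\mathrm{Fn}^{M^-}_{\mathbb{K}}(\kappa)$ with $\mathcal{A}_i\subseteq\mathcal{A}_j$ for $i<j<\gamma$, there is $\mathcal{B}\in\mathrm{Fn}^{M^-}_{\mathbb{K}}(\kappa)$ with $\mathcal{A}_i\subseteq\mathcal{B}$ for all $i<\gamma$.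
   Context: Languages may be many-sorted. For an $\mathcal{L}$-structure $\mathcal{M}$ and a set $A$ of its elements, the substructure generated by $A$ is the smallest substructure of $\mathcal{M}$ containing $A$ (closure of $A$ under all terms). $\mathcal{M}$ is $<\lambda$-generated if it is generated by a set of size $<\lambda$; for a tuple $\mathbf{a}$, ''$\mathbf{a}$ generates $\mathcal{A}$'' means the set of its entries does. An age in $\mathcal{L}$ is a class of $\mathcal{L}$-structures closed under isomorphism. For an age $\mathbb{K}$: $\mathbb{K}_\kappa$ is the class of elements of $\mathbb{K}$ that are $<\kappa$-generated; for $\mathcal{L}^-\subseteq\mathcal{L}$, $\mathbb{K}\restriction\mathcal{L}^-=\{\mathcal{A}\restriction\mathcal{L}^-:\mathcal{A}\in\mathbb{K}\}$. $\mathbb{K}$ has HP if it is closed under substructures; JEP if any two members embed in a common member; AP if for embeddings $i_1:\mathcal{A}_0\to\mathcal{A}_1$, $i_2:\mathcal{A}_0\to\mathcal{A}_2$ in $\mathbb{K}$ there are $\mathcal{A}_3\in\mathbb{K}$ and embeddings $j_1:\mathcal{A}_1\to\mathcal{A}_3$, $j_2:\mathcal{A}_2\to\mathcal{A}_3$ with $j_1\circ i_1=j_2\circ i_2$; SAP if moreover one can always choose these with $j_1[\mathcal{A}_1]\cap j_2[\mathcal{A}_2]=(j_1\circ i_1)[\mathcal{A}_0]$. A Fraïssé class is an age with HP, JEP, AP; a strong Fraïssé class is a Fraïssé class with SAP. $\mathbb{K}$ is closed under less than $\lambda$-unions if for every $\gamma<\lambda$ and every chain $(\mathcal{A}_i)_{i<\gamma}$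 in $\mathbb{K}$ with $\mathcal{A}_i\subseteq\mathcal{A}_j$ for $i<j$, $\bigcup_{i<\gamma}\mathcal{A}_i\in\mathbb{K}$. For an $\mathcal{L}$-structure $\mathcal{A}$ and tuple $\mathbf{a}$ in it, $\mathrm{qftp}^{\mathcal{A}}(\mathbf{a})(\mathbf{x})$ is the set of literals in variables $\mathbf{x}$ satisfied by $\mathbf{a}$ in $\mathcal{A}$. $\mathrm{Fr}_\kappa(\mathbb{K})\subseteq\mathcal{L}_{\infty\kappa}(\mathcal{L})$ is the theory with axioms: (a) for all $\mathcal{A}\in\mathbb{K}$ and tuples $\mathbf{a}$ generating $\mathcal{A}$: $(\exists\mathbf{x})\bigwedge\mathrm{qftp}^{\mathcal{A}}(\mathbf{a})(\mathbf{x})$; (b) for all $\mathcal{A},\mathcal{B}\in\mathbb{K}$ with $\mathcal{A}\subseteq\mathcal{B}$, $\mathbf{a}$ generating $\mathcal{A}$ and $\mathbf{b}$ generating $\mathcal{B}$: $(\forall\mathbf{x})[\bigwedge\mathrm{qftp}^{\mathcal{A}}(\mathbf{a})(\mathbf{x})\to(\exists\mathbf{y})\bigwedge\mathrm{qftp}^{\mathcal{B}}(\mathbf{a}\mathbf{b})(\mathbf{x}\mathbf{y})]$. For an $\mathcal{L}^-$-structure $M^-$, $\mathbb{K}[M^-]=\{\mathcal{A}\in\mathbb{K}:\mathcal{A}\restriction\mathcal{L}^-\text{ is a substructure of }M^-\}$. $\mathrm{Fn}^{M^-}_{\mathbb{K}}(\kappa)$ is the partial order whose elements are the structures in $\mathbb{K}_\kappa[M^-]$,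 ordered by $\mathcal{M}\le\mathcal{N}$ iff $\mathcal{N}\subseteq\mathcal{M}$ (substructure). *)

From Stdlib Require Import Arith.

Definition fin (n : nat) : Type := {i : nat | i < n}.

Definition card_le (A B : Type) : Prop :=
  exists f : A -> B, forall x y, f x = f y -> x = y.
Definition card_lt (A B : Type) : Prop := card_le A B /\ ~ card_le B A.

Definition well_order {T : Type} (R : T -> T -> Prop) : Prop :=
  (forall x, ~ R x x) /\
  (forall x y z, R x y -> R y z -> R x z) /\
  (forall x y, R x y \/ x = y \/ R y x) /\
  well_founded R.

(* A cardinal is represented as an initial ordinal: a well-ordered type
   each of whose proper initial segments has strictly smaller cardinality. *)
Definition is_infinite_cardinal {T : Type} (lt : T -> T -> Prop) : Prop :=
  well_order lt /\
  card_le nat T /\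
  (forall a : T, ~ card_le T {b : T | lt b a}).

Definition cofinal {T : Type} (lt : T -> T -> Prop) (X : T -> Prop) : Prop :=
  forall a : T, exists b, X b /\ (lt a b \/ a = b).

(* lambda <= cf(kappa): every cofinal subset of kappa has size >= lambda,
   since cf(kappa) is the least size of a cofinal subset. *)
Definition le_cf (Lam : Type) {T : Type} (lt : T -> T -> Prop) : Prop :=
  forall X : T -> Prop, cofinal lt X -> card_le Lam {b : T | X b}.

Record Language : Type := {
  sort : Type;
  fsym : Type;
  rsym : Type;
  farity : fsym -> nat;
  fsort : forall f : fsym, fin (farity f) -> sort;
  fcod : fsym -> sort;
  rarity : rsym -> nat;
  rsort : forall r : rsym, fin (rarity r) -> sort
}.

Arguments farity {_} _.
Arguments fsort {_} _ _.
Arguments fcod {_} _.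
Arguments rarity {_} _.
Arguments rsort {_} _ _.

Record Structure (L : Language) : Type := {
  dom : sort L -> Type;
  fint : forall f : fsym L, (forall i : fin (farity f), dom (fsort f i)) -> dom (fcod f);
  rint : forall r : rsym L, (forall i : fin (rarity r), dom (rsort r i)) -> Prop
}.

Arguments dom {_} _ _.
Arguments fint {_} _ _ _.
Arguments rint {_} _ _ _.

Section Basics.
Variable L : Language.

Definition is_embedding (A B : Structure L) (h : forall s, dom A s -> dom B s) : Prop :=
  (forall s x y, h s x = h s y -> x = y) /\
  (forall f args, h (fcod f) (fint A f args) = fint B f (fun i => h _ (args i))) /\
  (forall r args, rint A r args <-> rint B r (fun i => h _ (args i))).

Definition is_iso (A B : Structure L) (h : forall s, dom A s -> dom B s) : Prop :=
  is_embedding A B h /\ (forall s (y : dom B s), exists x, h s x = y).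

Definition isomorphic (A B : Structure L) : Prop := exists h, is_iso A B h.

Definition closed (A : Structure L) (D : forall s, dom A s -> Prop) : Prop :=
  forall f (args : forall i : fin (farity f), dom A (fsort f i)),
    (forall i, D _ (args i)) -> D _ (fint A f args).

Definition induce (A : Structure L) (D : forall s, dom A s -> Prop)
  (H : closed A D) : Structure L :=
  {| dom := fun s => {x : dom A s | D s x};
     fint := fun f args =>
       exist _ (fint A f (fun i => proj1_sig (args i)))
               (H f (fun i => proj1_sig (args i)) (fun i => proj2_sig (args i)));
     rint := fun r args => rint A r (fun i => proj1_sig (args i)) |}.

Definition generates (A : Structure L) (X : forall s, dom A s -> Prop) : Prop :=
  forall D, closed A D -> (forall s x, X s x -> D s x) -> forall s x, D s x.

Definition lt_generated (Kap : Type) (A : Structure L) : Prop :=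
  exists X : forall s, dom A s -> Prop,
    card_lt {s : sort L & {x : dom A s | X s x}} Kap /\ generates A X.

Definition age (K : Structure L -> Prop) : Prop :=
  forall A B, K A -> isomorphic A B -> K B.

Definition HP (K : Structure L -> Prop) : Prop :=
  forall A D (H : closed A D), K A -> K (induce A D H).

Definition JEP (K : Structure L -> Prop) : Prop :=
  forall A B, K A -> K B -> exists C j1 j2,
    K C /\ is_embedding A C j1 /\ is_embedding B C j2.

Definition AP (K : Structure L -> Prop) : Prop :=
  forall A0 A1 A2 i1 i2, K A0 -> K A1 -> K A2 ->
    is_embedding A0 A1 i1 -> is_embedding A0 A2 i2 ->
    exists A3 j1 j2, K A3 /\ is_embedding A1 A3 j1 /\ is_embedding A2 A3 j2 /\
      (forall s x, j1 s (i1 s x) = j2 s (i2 s x)).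

Definition SAP (K : Structure L -> Prop) : Prop :=
  forall A0 A1 A2 i1 i2, K A0 -> K A1 -> K A2 ->
    is_embedding A0 A1 i1 -> is_embedding A0 A2 i2 ->
    exists A3 j1 j2, K A3 /\ is_embedding A1 A3 j1 /\ is_embedding A2 A3 j2 /\
      (forall s x, j1 s (i1 s x) = j2 s (i2 s x)) /\
      (forall s (y : dom A3 s),
         ((exists x1, j1 s x1 = y) /\ (exists x2, j2 s x2 = y)) <->
         (exists x0, j1 s (i1 s x0) = y)).

Definition fraisse_class (K : Structure L -> Prop) : Prop :=
  age K /\ HP K /\ JEP K /\ AP K.

Definition strong_fraisse_class (K : Structure L -> Prop) : Prop :=
  fraisse_class K /\ SAP K.

(* A chain (A_i)_{i<gamma}, gamma an
   ordinal < lambda, is represented by a well-ordered index type I of size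
   < lambda, and substructures A_i (universes D i) of a common structure C
   (e.g. the union itself). *)
Definition union_closed (Lam : Type) (K : Structure L -> Prop) : Prop :=
  forall (I : Type) (ltI : I -> I -> Prop), well_order ltI -> card_lt I Lam ->
  forall (C : Structure L) (D : I -> forall s, dom C s -> Prop)
         (H : forall i, closed C (D i)),
    (forall i, K (induce C (D i) (H i))) ->
    (forall i j, ltI i j -> forall s x, D i s x -> D j s x) ->
    exists HU : closed C (fun s x => exists i, D i s x),
      K (induce C (fun s x => exists i, D i s x) HU).

Section Syntax.
Variables (J : Type) (sg : J -> sort L).

Inductive term : sort L -> Type :=
| tvar : forall j : J, term (sg j)
| tapp : forall f : fsym L,
    (forall i : fin (farity f), term (fsort f i)) -> term (fcod f).

Inductive atomic : Type :=
| aeq : forall s, term s -> term s -> atomic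
| arel : forall r : rsym L, (forall i : fin (rarity r), term (rsort r i)) -> atomic.

Inductive literal : Type :=
| lpos : atomic -> literal
| lneg : atomic -> literal.

Fixpoint teval (A : Structure L) (a : forall j, dom A (sg j)) s (t : term s)
  : dom A s :=
  match t in term s0 return dom A s0 with
  | tvar j => a j
  | tapp f args => fint A f (fun i => teval A a _ (args i))
  end.

Definition holds_atomic (A : Structure L) (a : forall j, dom A (sg j))
  (phi : atomic) : Prop :=
  match phi with
  | aeq s t1 t2 => teval A a s t1 = teval A a s t2
  | arel r args => rint A r (fun i => teval A a _ (args i))
  end.

Definition holds (A : Structure L) (a : forall j, dom A (sg j))
  (phi : literal) : Prop :=
  match phi with
  | lpos p => holds_atomic A a p
  | lneg p => ~ holds_atomic A a p
  end.

Definition realizes_qftp (A : Structure L) (a : forall j, dom A (sg j))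
  (M : Structure L) (m : forall j, dom M (sg j)) : Prop :=
  forall phi : literal, holds A a phi -> holds M m phi.

End Syntax.

Definition entries {J : Type} {sg : J -> sort L} (A : Structure L)
  (a : forall j, dom A (sg j)) : forall s, dom A s -> Prop :=
  fun s x => exists j, existT (dom A) (sg j) (a j) = existT (dom A) s x.

Definition sum_sort {J J' : Type} (sg : J -> sort L) (sg' : J' -> sort L)
  : J + J' -> sort L :=
  fun x => match x with inl j => sg j | inr j => sg' j end.

Definition tuple_app {J J' : Type} {sg : J -> sort L} {sg' : J' -> sort L}
  (A : Structure L) (a : forall j, dom A (sg j)) (b : forall j, dom A (sg' j))
  : forall x : J + J', dom A (sum_sort sg sg' x) :=
  fun x => match x as x0 return dom A (sum_sort sg sg' x0) with
           | inl j => a j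
           | inr j => b j
           end.

(* M |= Fr_kappa(K) ; tuples have length < kappa (as required in L_{infty kappa}) *)
Definition models_Fr (Kap : Type) (K : Structure L -> Prop) (M : Structure L) : Prop :=
  (forall (A : Structure L), K A ->
   forall (J : Type) (sg : J -> sort L) (a : forall j, dom A (sg j)),
     card_lt J Kap -> generates A (entries A a) ->
     exists m : forall j, dom M (sg j), realizes_qftp J sg A a M m) /\
  (forall (B : Structure L) (D : forall s, dom B s -> Prop) (H : closed B D),
     K B -> K (induce B D H) ->
   forall (J : Type) (sg : J -> sort L) (a : forall j, dom (induce B D H) (sg j))
          (J' : Type) (sg' : J' -> sort L) (b : forall j, dom B (sg' j)),
     card_lt J Kap -> card_lt J' Kap ->
     generates (induce B D H) (entries (induce B D H) a) ->
     generates B (entries B b) ->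
     forall m : forall j, dom M (sg j),
       realizes_qftp J sg (induce B D H) a M m ->
       exists n : forall j, dom M (sg' j),
         realizes_qftp (J + J') (sum_sort sg sg')
           B (tuple_app B (fun j => proj1_sig (a j)) b)
           M (tuple_app M m n)).

End Basics.

Arguments tvar {_ _ _} _.
Arguments tapp {_ _ _} _ _.

(* L^- consists of all sorts and function symbols of L and of the relation
   symbols r with P r = true; thus L \ L^- is relational. *)
Definition sublang (L : Language) (P : rsym L -> bool) : Language :=
  {| sort := sort L;
     fsym := fsym L;
     rsym := {r : rsym L | P r = true};
     farity := @farity L;
     fsort := @fsort L;
     fcod := @fcod L;
     rarity := fun r : {r : rsym L | P r = true} => rarity (proj1_sig r);
     rsort := fun r : {r : rsym L | P r = true} => rsort (proj1_sig r) |}.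

Definition reduct {L : Language} (P : rsym L -> bool) (A : Structure L)
  : Structure (sublang L P) :=
  Build_Structure (sublang L P) (dom A) (fint A)
    (fun (r : rsym (sublang L P)) => rint A (proj1_sig r)).

Definition restrict_age {L : Language} (P : rsym L -> bool)
  (K : Structure L -> Prop) : Structure (sublang L P) -> Prop :=
  fun B => exists A, K A /\ isomorphic (sublang L P) B (reduct P A).

(* An L-structure whose L^- reduct is a substructure of M^- is given by its
   universe D (a subset of M^- closed under all function symbols) together
   with interpretations of the relation symbols of L \ L^- (only their values
   on tuples from D matter). *)
Record FnCand {L : Language} (P : rsym L -> bool) (M : Structure (sublang L P))
  : Type := {
  fc_dom : forall s, dom M s -> Prop;
  fc_closed : closed (sublang L P) M fc_dom;
  fc_rel : forall r : rsym L, (forall i : fin (@rarity L r), dom M (@rsort L r i)) -> Prop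
}.

Arguments fc_dom {_ _ _} _ _ _.
Arguments fc_closed {_ _ _} _ _ _ _.
Arguments fc_rel {_ _ _} _ _ _.

Definition fc_struct {L : Language} {P : rsym L -> bool} {M : Structure (sublang L P)}
  (A : FnCand P M) : Structure L :=
  Build_Structure L (fun s => {x : dom M s | fc_dom A s x})
    (fun f args =>
       exist _ (fint M f (fun i => proj1_sig (args i)))
               (fc_closed A f (fun i => proj1_sig (args i))
                  (fun i => proj2_sig (args i))))
    (fun (r : rsym L) args =>
       (forall e : P r = true,
          rint M (exist (fun r0 => P r0 = true) r e) (fun i => proj1_sig (args i))) /\
       (P r = false -> fc_rel A r (fun i => proj1_sig (args i)))).

Definition in_Fn {L : Language} (P : rsym L -> bool) (K : Structure L -> Prop)
  (Kap : Type) (M : Structure (sublang L P)) (A : FnCand P M) : Prop :=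
  K (fc_struct A) /\ lt_generated L Kap (fc_struct A).

Definition fc_sub {L : Language} {P : rsym L -> bool} {M : Structure (sublang L P)}
  (A B : FnCand P M) : Prop :=
  (forall s x, fc_dom A s x -> fc_dom B s x) /\
  (forall (r : rsym L) (args : forall i : fin (@rarity L r), dom M (@rsort L r i)),
     (forall i, fc_dom A _ (args i)) -> P r = false ->
     (fc_rel A r args <-> fc_rel B r args)).

Definition Fn_lambda_closed {L : Language} (P : rsym L -> bool)
  (K : Structure L -> Prop) (Kap : Type) (M : Structure (sublang L P))
  (Lam : Type) : Prop :=
  forall (I : Type) (ltI : I -> I -> Prop), well_order ltI -> card_lt I Lam ->
  forall A : I -> FnCand P M,
    (forall i, in_Fn P K Kap M (A i)) ->
    (forall i j, ltI i j -> fc_sub (A i) (A j)) ->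
    exists B : FnCand P M, in_Fn P K Kap M B /\ forall i, fc_sub (A i) B.

(* The union B of the chain, interpreting the relations of L \ L^- as the
   union of their interpretations in the A_i, is an upper bound.  It lies in K
   because K is closed under < lambda-unions, and it is generated by the union
   of generating sets X_i of the A_i.  That union has size < kappa: since
   gamma < lambda <= cf(kappa), the ordinals carrying gamma and the |X_i| are
   bounded by some mu < kappa, so the union injects into mu x mu, which has
   size < kappa by Hessenberg's theorem |mu x mu| = |mu| for infinite mu (via
   Goedel's well-ordering of pairs). *)

From Stdlib Require Import Arith List Lia Classical ClassicalEpsilon
  FunctionalExtensionality ProofIrrelevance FinFun Wellfounded.

Local Notation choose := constructive_indefinite_description.

Lemma sig_ext {A} {P : A -> Prop} (x y : {a | P a}) :
  proj1_sig x = proj1_sig y -> x = y.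
Proof. apply eq_sig_hprop; intros; apply proof_irrelevance. Qed.

Lemma card_le_refl A : card_le A A.
Proof. exists (fun x => x); auto. Qed.

Lemma card_le_trans A B C : card_le A B -> card_le B C -> card_le A C.
Proof. intros [f Hf] [g Hg]; exists (fun x => g (f x)); auto. Qed.

Lemma card_le_lt_trans A B C : card_le A B -> card_lt B C -> card_lt A C.
Proof.
  intros H [H1 H2]; split; [eapply card_le_trans; eauto|].
  intro H3; apply H2; eapply card_le_trans; eauto.
Qed.

Lemma card_le_sig A (P : A -> Prop) : card_le {x | P x} A.
Proof. exists (@proj1_sig _ _); apply sig_ext. Qed.

Lemma card_le_of_onto {A B} (f : A -> B) :
  (forall y, exists x, f x = y) -> card_le B A.
Proof.
  intro Hf; destruct (choice _ Hf) as [g Hg].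
  exists g; intros x y E; rewrite <- (Hg x), <- (Hg y), E; reflexivity.
Qed.

Lemma card_le_prod A A' B B' :
  card_le A A' -> card_le B B' -> card_le (A * B) (A' * B').
Proof.
  intros [f Hf] [g Hg]; exists (fun p => (f (fst p), g (snd p))).
  intros [a b] [c d] E; injection E; intros; f_equal; auto.
Qed.

Lemma card_le_sigma {I W Z} (Y : I -> Type) :
  card_le I W -> (forall i, card_le (Y i) Z) -> card_le {i & Y i} (W * Z).
Proof.
  intros [f Hf] HY.
  set (g := fun i => proj1_sig (choose _ (HY i))).
  assert (Hg : forall i x y, g i x = g i y -> x = y)
    by (intro i; exact (proj2_sig (choose _ (HY i)))).
  exists (fun p => (f (projT1 p), g (projT1 p) (projT2 p))).
  intros [i1 y1] [i2 y2] E; simpl in E.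
  pose proof (Hf _ _ (f_equal fst E)); subst i2.
  pose proof (Hg _ _ _ (f_equal snd E)); subst y2; reflexivity.
Qed.

Definition listable (A : Type) : Prop := exists l : list A, forall x, In x l.

Lemma listable_of_not_infinite A : ~ card_le nat A -> listable A.
Proof.
  intros Hfin; apply NNPP; intro Hnl.
  assert (Hfresh : forall l : list A, exists x, ~ In x l).
  { intro l; apply NNPP; intro H; apply Hnl; exists l; intro x.
    apply NNPP; intro Hx; apply H; exists x; auto. }
  destruct (choice _ Hfresh) as [fresh Hf].
  set (enum := fix enum n := match n with
                             | 0 => nil
                             | S n => fresh (enum n) :: enum n end).
  assert (Hin : forall n k, n < k -> In (fresh (enum n)) (enum k)).
  { intros n k; induction k; intro Hk; [lia|].
    simpl; destruct (Nat.eq_dec n k) as [->|]; [left; auto|right; apply IHk; lia]. }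
  apply Hfin; exists (fun n => fresh (enum n)); intros x y E.
  destruct (Nat.lt_total x y) as [h|[h|h]]; auto; exfalso.
  - apply (Hf (enum y)); rewrite <- E; apply Hin; auto.
  - apply (Hf (enum x)); rewrite E; apply Hin; auto.
Qed.

Lemma listable_not_infinite A : listable A -> ~ card_le nat A.
Proof.
  intros [l Hl] [f Hf].
  assert (H := @NoDup_incl_length _ (map f (seq 0 (S (length l)))) l).
  rewrite length_map, length_seq in H.
  enough (S (length l) <= length l) by lia.
  apply H; [apply Injective_map_NoDup; [exact Hf|apply seq_NoDup]|].
  intros x _; apply Hl.
Qed.

Lemma listable_prod A B : listable A -> listable B -> listable (A * B).
Proof.
  intros [l1 H1] [l2 H2]; exists (list_prod l1 l2); intros [a b]; apply in_prod; auto.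
Qed.

Lemma listable_option A : listable A -> listable (option A).
Proof.
  intros [l H]; exists (None :: map Some l); intros [a|]; simpl; auto.
  right; apply in_map; auto.
Qed.

Lemma listable_card_le_nat A : listable A -> card_le A nat.
Proof.
  intros [l Hl].
  destruct (choice (fun x n => nth_error l n = Some x))
    as [f Hf]; [intro x; apply In_nth_error, Hl|].
  exists f; intros x y E; pose proof (Hf x) as Hx; rewrite E, Hf in Hx.
  injection Hx; auto.
Qed.

(* Hilbert's hotel: shift the copy of nat inside A by one to make room for None. *)
Lemma card_le_option A : card_le nat A -> card_le (option A) A.
Proof.
  intros [h Hh].
  destruct (choice (fun x n => (exists m, h m = x) -> h n = x)) as [pre Hpre].
  { intro x; destruct (classic (exists m, h m = x)) as [[m Hm]|N].
    - exists m; auto.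
    - exists 0; intro H; contradiction. }
  set (f := fun o : option A => match o with
        | None => h 0
        | Some x => if excluded_middle_informative (exists n, h n = x)
                    then h (S (pre x)) else x end).
  exists f; intros [x|] [y|]; unfold f;
    repeat destruct excluded_middle_informative as [?|?]; intro E;
    try solve [apply Hh in E; discriminate | congruence | exfalso; eauto].
  - apply Hh in E; injection E as E.
    rewrite <- (Hpre x), <- (Hpre y), E; auto.
Qed.

Lemma well_founded_min {T} (R : T -> T -> Prop) : well_founded R ->
  forall Q : T -> Prop, (exists x, Q x) -> exists x, Q x /\ forall y, R y x -> ~ Q y.
Proof.
  intros wf Q [x Hx]; induction (wf x) as [x _ IH].
  destruct (classic (exists y, R y x /\ Q y)) as [[y [H1 H2]]|N].
  - eapply IH; eauto.
  - exists x; split; auto; intros y H1 H2; apply N; eauto.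
Qed.

Lemma well_order_preimage {A B} (f : A -> B) (RB : B -> B -> Prop) :
  (forall x y, f x = f y -> x = y) -> well_order RB ->
  well_order (fun x y => RB (f x) (f y)).
Proof.
  intros Hf [H1 [H2 [H3 H4]]]; split; [|split; [|split]].
  - intros x; apply H1.
  - intros x y z; apply H2.
  - intros x y; destruct (H3 (f x) (f y)) as [h|[h|h]]; auto.
  - apply wf_inverse_image; auto.
Qed.

Section SegmentEmbedding.
Variables (W V : Type) (ltW : W -> W -> Prop) (ltV : V -> V -> Prop).
Hypothesis woW : well_order ltW.
Hypothesis woV : well_order ltV.
Hypothesis small_segments : forall w, ~ card_le V {w' | ltW w' w}.

Lemma least_unused_exists (w : W) (rec : forall w', ltW w' w -> V) :
  exists v, (forall w' h, rec w' h <> v) /\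
            (forall v', ltV v' v -> exists w' h, rec w' h = v').
Proof.
  set (Unused := fun v => forall w' h, rec w' h <> v).
  assert (Hex : exists v, Unused v).
  { apply NNPP; intro N; apply (small_segments w).
    apply (card_le_of_onto (fun p : {w' | ltW w' w} => rec (proj1_sig p) (proj2_sig p))).
    intro v; apply NNPP; intro Nv; apply N; exists v; intros w' h E; apply Nv.
    exists (exist _ w' h); auto. }
  destruct (well_founded_min ltV (proj2 (proj2 (proj2 woV))) Unused Hex)
    as [v [Hv Hmin]].
  exists v; split; auto; intros v' Hv'; specialize (Hmin v' Hv').
  apply NNPP; intro N; apply Hmin; intros w' h E; apply N; eauto.
Qed.

Definition least_unused (w : W) (rec : forall w', ltW w' w -> V) : V :=
  proj1_sig (choose _ (least_unused_exists w rec)).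

Definition segment_embedding : W -> V :=
  Fix (proj2 (proj2 (proj2 woW))) (fun _ => V) least_unused.

Lemma segment_embedding_eq w :
  segment_embedding w = least_unused w (fun w' _ => segment_embedding w').
Proof.
  unfold segment_embedding; rewrite Fix_eq; auto.
  intros x f g Hfg; f_equal.
  apply functional_extensionality_dep; intro; apply functional_extensionality_dep; auto.
Qed.

Lemma segment_embedding_spec w :
  (forall w', ltW w' w -> segment_embedding w' <> segment_embedding w) /\
  (forall v, ltV v (segment_embedding w) ->
     exists w', ltW w' w /\ segment_embedding w' = v).
Proof.
  pose proof (proj2_sig (choose _ (least_unused_exists w (fun w' _ => segment_embedding w'))))
    as [H1 H2].
  fold (least_unused w (fun w' _ => segment_embedding w')) in H1, H2.
  rewrite <- segment_embedding_eq in H1, H2.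
  split; [exact H1|].
  intros v hv; destruct (H2 v hv) as [w' [h' E]]; eauto.
Qed.

Lemma segment_embedding_inj x y : segment_embedding x = segment_embedding y -> x = y.
Proof.
  intros E; destruct (proj1 (proj2 (proj2 woW)) x y) as [h|[h|h]]; auto; exfalso.
  - exact (proj1 (segment_embedding_spec y) x h E).
  - exact (proj1 (segment_embedding_spec x) y h (eq_sym E)).
Qed.

End SegmentEmbedding.

Lemma card_le_of_small_segments {W V} (ltW : W -> W -> Prop) (ltV : V -> V -> Prop) :
  well_order ltW -> well_order ltV ->
  (forall w, ~ card_le V {w' | ltW w' w}) -> card_le W V.
Proof. intros woW woV small; eexists; apply (segment_embedding_inj _ _ _ _ woW woV small). Qed.

Section InitialOrdinal.
Variables (Kap : Type) (R : Kap -> Kap -> Prop).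
Hypothesis HK : is_infinite_cardinal R.

Let R_wo : well_order R := proj1 HK.
Let R_irrefl : forall x, ~ R x x := proj1 R_wo.
Let R_trans : forall x y z, R x y -> R y z -> R x z := proj1 (proj2 R_wo).
Let R_total : forall x y, R x y \/ x = y \/ R y x := proj1 (proj2 (proj2 R_wo)).
Let R_wf : well_founded R := proj2 (proj2 (proj2 R_wo)).

Definition seg (a : Kap) := {b | R b a}.
Definition leR x y := R x y \/ x = y.

Lemma leR_trans x y z : leR x y -> leR y z -> leR x z.
Proof. unfold leR; intros [h|h] [h'|h']; subst; eauto. Qed.

Definition maxR x y := if excluded_middle_informative (R x y) then y else x.

Lemma leR_max_l x y : leR x (maxR x y).
Proof. unfold maxR, leR; destruct excluded_middle_informative; auto. Qed.

Lemma leR_max_r x y : leR y (maxR x y).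
Proof.
  unfold maxR, leR; destruct excluded_middle_informative; auto.
  destruct (R_total x y) as [h|[h|h]]; subst; tauto.
Qed.

Lemma maxR_lub_lt x y m : R x m -> R y m -> R (maxR x y) m.
Proof. unfold maxR; destruct excluded_middle_informative; auto. Qed.

Lemma seg_card_le_mono a b : leR a b -> card_le (seg a) (seg b).
Proof.
  intros H; assert (Hx : forall x, R x a -> R x b) by (destruct H; subst; eauto).
  exists (fun x => exist _ (proj1_sig x) (Hx _ (proj2_sig x))).
  intros x y E; apply sig_ext; exact (f_equal (@proj1_sig _ _) E).
Qed.

(* Goedel's ordering of pairs. *)
Definition pair_lt (p q : Kap * Kap) : Prop :=
  R (maxR (fst p) (snd p)) (maxR (fst q) (snd q)) \/
  (maxR (fst p) (snd p) = maxR (fst q) (snd q) /\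
   (R (fst p) (fst q) \/ (fst p = fst q /\ R (snd p) (snd q)))).

Lemma pair_lt_wo : well_order pair_lt.
Proof.
  split; [|split; [|split]].
  - intros [a b]; unfold pair_lt; simpl; intros [h|[_ [h|[_ h]]]]; eapply R_irrefl; eauto.
  - intros [a b] [c d] [e f]; unfold pair_lt; simpl.
    generalize (maxR a b) (maxR c d) (maxR e f); intros m1 m2 m3.
    intros [h|[h [h'|[h' h'']]]] [k|[k [k'|[k' k'']]]]; subst; eauto 7.
  - intros [a b] [c d]; unfold pair_lt; simpl.
    destruct (R_total (maxR a b) (maxR c d)) as [h|[h|h]]; [tauto| |tauto].
    destruct (R_total a c) as [k|[k|k]]; [tauto| |right; right; right; split; auto].
    subst c; destruct (R_total b d) as [l|[l|l]];
      [tauto|subst; tauto|right; right; right; split; auto].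
  - enough (H : forall m p, maxR (fst p) (snd p) = m -> Acc pair_lt p)
      by (intro p; eapply H; eauto).
    intro m; induction (R_wf m) as [m _ IHm].
    intros [a b]; simpl; revert b; induction (R_wf a) as [a _ IHa].
    intro b; induction (R_wf b) as [b _ IHb]; intro E.
    constructor; intros [c d]; unfold pair_lt; simpl.
    intros [h|[h [h'|[h' h'']]]].
    + eapply IHm; [rewrite <- E; exact h|reflexivity].
    + eapply IHa; eauto; simpl; congruence.
    + subst; apply IHb; auto.
Qed.

Definition seg_lt (m : Kap) (x y : seg m) : Prop := R (proj1_sig x) (proj1_sig y).

Lemma seg_lt_wo m : well_order (seg_lt m).
Proof. apply (well_order_preimage (@proj1_sig _ _)); [apply sig_ext|exact R_wo]. Qed.

Definition seg_pair_lt (m : Kap) (p q : seg m * seg m) : Prop :=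
  pair_lt (proj1_sig (fst p), proj1_sig (snd p)) (proj1_sig (fst q), proj1_sig (snd q)).

Lemma seg_pair_lt_wo m : well_order (seg_pair_lt m).
Proof.
  apply (well_order_preimage (fun p : seg m * seg m => (proj1_sig (fst p), proj1_sig (snd p)))).
  - intros [a b] [c d] E; simpl in E; injection E; intros; f_equal; apply sig_ext; auto.
  - exact pair_lt_wo.
Qed.

Definition seg_opt (c x : Kap) : option (seg c) :=
  match excluded_middle_informative (R x c) with
  | left h => Some (exist _ x h)
  | right _ => None
  end.

Lemma seg_opt_inj c x y : leR x c -> leR y c -> seg_opt c x = seg_opt c y -> x = y.
Proof.
  unfold seg_opt; do 2 destruct excluded_middle_informative; intros hx hy E;
    try discriminate.
  - injection E; auto.
  - destruct hx, hy; try tauto; congruence.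
Qed.

(* option (seg c) stands for the closed interval [0, c]. *)
Lemma seg_pair_lt_segment m (a b : seg m) :
  card_le {w | seg_pair_lt m w (a, b)}
    (option (seg (maxR (proj1_sig a) (proj1_sig b))) *
     option (seg (maxR (proj1_sig a) (proj1_sig b)))).
Proof.
  set (c := maxR (proj1_sig a) (proj1_sig b)).
  assert (Hw : forall w : {w | seg_pair_lt m w (a, b)},
             leR (proj1_sig (fst (proj1_sig w))) c /\
             leR (proj1_sig (snd (proj1_sig w))) c).
  { intros [[x y] Hxy]; simpl; unfold seg_pair_lt, pair_lt in Hxy; simpl in Hxy.
    assert (Hm : leR (maxR (proj1_sig x) (proj1_sig y)) c)
      by (destruct Hxy as [h|[h _]]; [left|right]; auto).
    split; [eapply leR_trans; [apply leR_max_l|exact Hm]|].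
    eapply leR_trans; [apply leR_max_r|exact Hm]. }
  exists (fun w => (seg_opt c (proj1_sig (fst (proj1_sig w))),
                    seg_opt c (proj1_sig (snd (proj1_sig w))))).
  intros w1 w2 E; injection E; intros E2 E1.
  destruct (Hw w1), (Hw w2).
  apply seg_opt_inj in E1, E2; auto.
  apply sig_ext; destruct w1 as [[x1 y1] p1], w2 as [[x2 y2] p2]; simpl in *.
  f_equal; apply sig_ext; auto.
Qed.

(* Hessenberg: induction on m; if seg m is equipotent to a shorter segment
   use the induction hypothesis, otherwise every proper initial segment of
   Goedel's ordering on seg m x seg m is smaller than seg m. *)
Lemma seg_square_le m : card_le nat (seg m) -> card_le (seg m * seg m) (seg m).
Proof.
  induction (R_wf m) as [m _ IH]; intro Hinf.
  destruct (well_founded_min R R_wf (fun b => card_le (seg m) (seg b))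
              (ex_intro _ m (card_le_refl _))) as [m' [Hm' Hmin]].
  destruct (R_total m' m) as [Hlt|[Heq|Hgt]].
  - assert (Hinf' : card_le nat (seg m')) by (eapply card_le_trans; eauto).
    eapply card_le_trans; [apply card_le_prod; exact Hm'|].
    eapply card_le_trans; [exact (IH m' Hlt Hinf')|].
    apply seg_card_le_mono; left; auto.
  - subst m'.
    apply (card_le_of_small_segments _ _ (seg_pair_lt_wo m) (seg_lt_wo m)).
    intros [a b] Hbad.
    set (c := maxR (proj1_sig a) (proj1_sig b)).
    assert (Hc : R c m) by (apply maxR_lub_lt; [exact (proj2_sig a)|exact (proj2_sig b)]).
    pose proof (card_le_trans _ _ _ Hbad (seg_pair_lt_segment m a b)) as Hsq.
    destruct (classic (card_le nat (seg c))) as [Hi|Hf].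
    + apply (Hmin c Hc); eapply card_le_trans; [exact Hsq|].
      eapply card_le_trans; [apply card_le_prod; apply card_le_option; exact Hi|].
      apply IH; auto.
    + apply listable_of_not_infinite in Hf.
      apply (listable_not_infinite _ (listable_prod _ _ (listable_option _ Hf)
                                                      (listable_option _ Hf))).
      eapply card_le_trans; eauto.
  - exfalso; exact (Hmin m Hgt (card_le_refl _)).
Qed.

Lemma seg_square_lt e : card_lt (seg e * seg e) Kap.
Proof.
  pose proof HK as [_ [Hnat Hseg]].
  destruct (classic (card_le nat (seg e))) as [Hi|Hf].
  - pose proof (seg_square_le e Hi) as Hsq; split.
    + eapply card_le_trans; [exact Hsq|apply card_le_sig].
    + intro H; apply (Hseg e); eapply card_le_trans; eauto.
  - apply listable_of_not_infinite in Hf; pose proof (listable_prod _ _ Hf Hf) as Hl; split.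
    + eapply card_le_trans; [apply listable_card_le_nat; exact Hl|exact Hnat].
    + intro H; apply (listable_not_infinite _ Hl); eapply card_le_trans; eauto.
Qed.

(* Collapse the image of X in Kap onto an initial segment: if that collapse
   were onto Kap, Kap would inject into X. *)
Lemma card_lt_le_seg X : card_lt X Kap -> exists a, card_le X (seg a).
Proof.
  intros [[g Hg] Hn].
  set (S := {b : Kap | exists x, g x = b}).
  set (RS := fun s t : S => R (proj1_sig s) (proj1_sig t)).
  assert (woS : well_order RS) by (apply (well_order_preimage (@proj1_sig _ _)); [apply sig_ext|exact R_wo]).
  assert (small : forall s, ~ card_le Kap {s' | RS s' s}).
  { intros s H; apply (proj2 (proj2 HK) (proj1_sig s)); eapply card_le_trans; [exact H|].
    exists (fun s' : {s' | RS s' s} =>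
              exist (fun b => R b (proj1_sig s)) (proj1_sig (proj1_sig s')) (proj2_sig s')).
    intros x y E; apply (f_equal (@proj1_sig _ _)) in E; apply sig_ext, sig_ext; auto. }
  set (F := segment_embedding S Kap RS R woS R_wo small).
  pose proof (segment_embedding_inj S Kap RS R woS R_wo small) as HF.
  assert (HX : card_le X S).
  { exists (fun x => exist (fun b => exists x, g x = b) (g x) (ex_intro _ x eq_refl)).
    intros x y E; apply Hg; exact (f_equal (@proj1_sig _ _) E). }
  destruct (classic (exists a, forall s, F s <> a)) as [[a Ha]|N].
  - exists a.
    assert (Hlt : forall s, R (F s) a).
    { intro s; destruct (R_total (F s) a) as [h|[h|h]]; auto; exfalso; [exact (Ha s h)|].
      destruct (proj2 (segment_embedding_spec _ _ _ _ woS R_wo small s) a h) as [s' [_ E]].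
      exact (Ha s' E). }
    eapply card_le_trans; [exact HX|].
    exists (fun s => exist (fun b => R b a) (F s) (Hlt s)).
    intros x y E; apply HF; exact (f_equal (@proj1_sig _ _) E).
  - exfalso; apply Hn; eapply card_le_trans.
    + apply (card_le_of_onto F); intro a.
      apply NNPP; intro Na; apply N; exists a; intros s E; apply Na; eauto.
    + apply (card_le_of_onto (fun x => exist (fun b => exists x, g x = b) (g x) (ex_intro _ x eq_refl))).
      intros [b [x <-]]; exists x; apply sig_ext; reflexivity.
Qed.

Variable Lam : Type.
Hypothesis Hcf : le_cf Lam R.

Lemma card_le_cf : card_le Lam Kap.
Proof.
  eapply card_le_trans; [apply (Hcf (fun _ => True))|apply card_le_sig].
  intro a; exists a; auto.
Qed.

Lemma card_lt_cf_bounded I (a : I -> Kap) : card_lt I Lam -> exists c, forall i, R (a i) c.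
Proof.
  intros [_ HI].
  destruct (classic (cofinal R (fun b => exists i, a i = b))) as [Hcof|Hncof].
  - exfalso; apply HI; eapply card_le_trans; [exact (Hcf _ Hcof)|].
    apply (card_le_of_onto (fun i => exist (fun b => exists i, a i = b) (a i) (ex_intro _ i eq_refl))).
    intros [b [i <-]]; exists i; apply sig_ext; reflexivity.
  - apply not_all_ex_not in Hncof as [c Hc]; exists c; intro i.
    destruct (R_total (a i) c) as [h|[h|h]]; auto; exfalso; apply Hc;
      exists (a i); split; eauto.
Qed.

Lemma card_lt_sigma (I : Type) (Y : I -> Type) :
  card_lt I Lam -> (forall i, card_lt (Y i) Kap) -> card_lt {i & Y i} Kap.
Proof.
  intros HI HY.
  assert (HIK : card_lt I Kap).
  { split; [eapply card_le_trans; [exact (proj1 HI)|apply card_le_cf]|].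
    intro H; apply (proj2 HI); eapply card_le_trans; [apply card_le_cf|exact H]. }
  destruct (card_lt_le_seg I HIK) as [d Hd].
  destruct (choice (fun i a => card_le (Y i) (seg a))) as [a Ha];
    [intro i; apply card_lt_le_seg, HY|].
  destruct (card_lt_cf_bounded I a HI) as [c Hc].
  set (e := maxR c d).
  eapply card_le_lt_trans; [|exact (seg_square_lt e)].
  apply card_le_sigma.
  - eapply card_le_trans; [exact Hd|apply seg_card_le_mono, leR_max_r].
  - intro i; eapply card_le_trans; [exact (Ha i)|apply seg_card_le_mono].
    eapply leR_trans; [left; apply Hc|apply leR_max_l].
Qed.

End InitialOrdinal.

Section Structures.
Variable L : Language.

Lemma isomorphic_sym (A B : Structure L) : isomorphic L A B -> isomorphic L B A.
Proof.
  intros [h [[h_inj [h_fun h_rel]] h_onto]].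
  set (g := fun s y => proj1_sig (choose _ (h_onto s y))).
  assert (Hg : forall s y, h s (g s y) = y) by (intros s y; exact (proj2_sig (choose _ (h_onto s y)))).
  assert (Hhg : forall n (S : fin n -> sort L) (args : forall k, dom B (S k)),
             (fun k => h _ (g _ (args k))) = args)
    by (intros; apply functional_extensionality_dep; intro; apply Hg).
  exists g; split; [split; [|split]|].
  - intros s x y E; rewrite <- (Hg s x), <- (Hg s y), E; reflexivity.
  - intros f args; apply h_inj; rewrite h_fun, !Hg, Hhg; reflexivity.
  - intros r args; rewrite h_rel, Hhg; reflexivity.
  - intros s x; exists (h s x); apply h_inj; rewrite Hg; reflexivity.
Qed.

Lemma generates_union (B : Structure L) {I : Type} (A : I -> Structure L)
    (e : forall i s, dom (A i) s -> dom B s) (X : forall i s, dom (A i) s -> Prop) :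
  (forall i f args, e i _ (fint (A i) f args) = fint B f (fun k => e i _ (args k))) ->
  (forall s y, exists i x, e i s x = y) ->
  (forall i, generates L (A i) (X i)) ->
  generates L B (fun s y => exists i x, X i s x /\ e i s x = y).
Proof.
  intros e_hom e_onto HX D HD HXD s y.
  destruct (e_onto s y) as [i [x <-]].
  apply (HX i (fun s x => D s (e i s x))); [|intros s' x' Hx'; apply HXD; eauto].
  intros f args Hargs; rewrite e_hom; apply HD; exact Hargs.
Qed.

Lemma card_le_union_sigma (B : Structure L) {I : Type} (A : I -> Structure L)
    (e : forall i s, dom (A i) s -> dom B s) (X : forall i s, dom (A i) s -> Prop) :
  card_le {s : sort L & {y : dom B s | exists i x, X i s x /\ e i s x = y}}
          {i : I & {s : sort L & {x : dom (A i) s | X i s x}}}.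
Proof.
  apply (card_le_of_onto (fun p =>
    let '(existT _ i (existT _ s (exist _ x hx))) := p in
    existT _ s (exist _ (e i s x) (ex_intro _ i (ex_intro _ x (conj hx eq_refl)))))).
  intros [s [y [i [x [hx <-]]]]].
  exists (existT _ i (existT _ s (exist _ x hx))).
  f_equal; apply sig_ext; reflexivity.
Qed.

End Structures.

Section Candidates.
Variables (L : Language) (P : rsym L -> bool) (M : Structure (sublang L P)).

Lemma fc_dom_closed (T X : FnCand P M) :
  closed L (fc_struct T) (fun s x => fc_dom X s (proj1_sig x)).
Proof. intros f args h; exact (fc_closed X f (fun k => proj1_sig (args k)) h). Qed.

Definition fc_restrict (T X : FnCand P M) : Structure L :=
  induce L (fc_struct T) (fun s x => fc_dom X s (proj1_sig x)) (fc_dom_closed T X).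

Lemma fc_struct_iso_restrict (T X : FnCand P M) :
  fc_sub X T -> isomorphic L (fc_struct X) (fc_restrict T X).
Proof.
  intros [HT Hrel].
  exists (fun s (x : dom (fc_struct X) s) =>
    exist (fun y : dom (fc_struct T) s => fc_dom X s (proj1_sig y))
      (exist (fun y => fc_dom T s y) (proj1_sig x) (HT _ _ (proj2_sig x))) (proj2_sig x)).
  split; [split; [|split]|].
  - intros s x y E; apply (f_equal (@proj1_sig _ _)), (f_equal (@proj1_sig _ _)) in E.
    apply sig_ext; exact E.
  - intros f args; apply sig_ext, sig_ext; reflexivity.
  - intros r args; simpl; split; intros [h1 h2]; split; auto;
      intro hp; apply (Hrel r (fun i => proj1_sig (args i))); auto;
      intro k; exact (proj2_sig (args k)).
  - intros s y; exists (exist _ (proj1_sig (proj1_sig y)) (proj2_sig y)).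
    apply sig_ext, sig_ext; reflexivity.
Qed.

Section Chain.
Variables (Idx : Type) (ltI : Idx -> Idx -> Prop) (A : Idx -> FnCand P M).
Hypothesis ltI_total : forall i j, ltI i j \/ i = j \/ ltI j i.
Hypothesis A_chain : forall i j, ltI i j -> fc_sub (A i) (A j).

Definition chain_rel (r : rsym L) (a : forall k : fin (rarity r), dom M (rsort r k)) : Prop :=
  exists i, (forall k, fc_dom (A i) _ (a k)) /\ fc_rel (A i) r a.

Lemma chain_rel_iff i r a : (forall k, fc_dom (A i) _ (a k)) -> P r = false ->
  (fc_rel (A i) r a <-> chain_rel r a).
Proof.
  intros hd hp; split; [intro h; exists i; auto|].
  intros [j [hj hr]]; destruct (ltI_total i j) as [h|[<-|h]]; auto.
  - apply (proj2 (A_chain i j h) r a hd hp); auto.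
  - apply (proj2 (A_chain j i h) r a hj hp); auto.
Qed.

(* The common superstructure in which union_closed takes the union. *)
Definition chain_ambient : FnCand P M :=
  Build_FnCand L P M (fun _ _ => True) (fun _ _ _ => I) chain_rel.

Lemma chain_sub_ambient i : fc_sub (A i) chain_ambient.
Proof. split; [intros; exact I|exact (chain_rel_iff i)]. Qed.

Definition chain_dom s (x : dom M s) : Prop := exists i, fc_dom (A i) s x.

Hypothesis chain_dom_closed : closed (sublang L P) M chain_dom.

Definition chain_union : FnCand P M :=
  Build_FnCand L P M chain_dom chain_dom_closed chain_rel.

Lemma chain_union_ub i : fc_sub (A i) chain_union.
Proof. split; [intros s x h; exists i; exact h|exact (chain_rel_iff i)]. Qed.

Lemma chain_union_sub_ambient : fc_sub chain_union chain_ambient.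
Proof. split; [intros; exact I|intros; reflexivity]. Qed.

Lemma chain_union_lt_generated (Kap : Type) :
  (forall Y : Idx -> Type, (forall i, card_lt (Y i) Kap) -> card_lt {i & Y i} Kap) ->
  (forall i, lt_generated L Kap (fc_struct (A i))) ->
  lt_generated L Kap (fc_struct chain_union).
Proof.
  intros Hsum HA.
  set (X := fun i => proj1_sig (choose _ (HA i))).
  assert (HX : forall i, card_lt {s : sort L & {x : dom (fc_struct (A i)) s | X i s x}} Kap /\
                         generates L (fc_struct (A i)) (X i))
    by (intro i; exact (proj2_sig (choose _ (HA i)))).
  set (e := fun i s (x : dom (fc_struct (A i)) s) =>
              exist (chain_dom s) (proj1_sig x) (ex_intro _ i (proj2_sig x))
              : dom (fc_struct chain_union) s).
  eexists; split.
  - eapply card_le_lt_trans; [apply (card_le_union_sigma L _ _ e X)|].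
    apply Hsum; intro i; apply HX.
  - apply generates_union; [| |intro i; apply HX].
    + intros i f args; apply sig_ext; reflexivity.
    + intros s [x [i hi]]; exists i, (exist _ x hi); apply sig_ext; reflexivity.
Qed.

End Chain.
End Candidates.

Theorem proposition3p2 (L : Language) (P : rsym L -> bool)
  (K : Structure L -> Prop)
  (Kap : Type) (ltKap : Kap -> Kap -> Prop) (Lam : Type)
  (M : Structure (sublang L P)) :
  strong_fraisse_class L K ->
  strong_fraisse_class (sublang L P) (restrict_age P K) ->
  is_infinite_cardinal ltKap ->
  models_Fr (sublang L P) Kap (restrict_age P K) M ->
  le_cf Lam ltKap ->
  union_closed L Lam K ->
  Fn_lambda_closed P K Kap M Lam.
Proof.
  intros [[K_age _] _] _ HK _ Hcf Hun Idx ltI woI HI A HA A_chain.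
  pose proof (proj1 (proj2 (proj2 woI))) as ltI_total.
  set (T := chain_ambient L P M Idx A).
  destruct (Hun Idx ltI woI HI (fc_struct T) (fun i s x => fc_dom (A i) s (proj1_sig x))
              (fun i => fc_dom_closed L P M T (A i))) as [HU HKU].
  - intro i; apply (K_age _ _ (proj1 (HA i))), fc_struct_iso_restrict.
    exact (chain_sub_ambient L P M Idx ltI A ltI_total A_chain i).
  - intros i j h s x; exact (proj1 (A_chain i j h) s (proj1_sig x)).
  - assert (Hclosed : closed (sublang L P) M (chain_dom L P M Idx A))
      by (intros f args h; exact (HU f (fun k => exist _ (args k) I) h)).
    set (B := chain_union L P M Idx A Hclosed).
    exists B; split; [split|].
    + apply (K_age _ _ HKU), isomorphic_sym.
      replace HU with (fc_dom_closed L P M T B) by apply proof_irrelevance.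
      apply fc_struct_iso_restrict, chain_union_sub_ambient.
    + apply chain_union_lt_generated; [|exact (fun i => proj2 (HA i))].
      intros Y HY; exact (card_lt_sigma Kap ltKap HK Lam Hcf Idx Y HI HY).
    + exact (chain_union_ub L P M Idx ltI A ltI_total A_chain Hclosed).
Qed.
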